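(* Let $\langle X,\tau\rangle$ be a Hausdorff space. Suppose there are a dense subset $Q\subseteq X$ and an asymmetric binary relation $R$ on $X$ such that $\langle X,\tau\rangle$ is $R$-bidirected along $Q$. Then $\langle X,\tau\rangle$ is not a continuous open image of the Sorgenfrey line.
   Context: The Sorgenfrey line is $\mathbb R$ with topology generated by $\{[a,b)\}$; ''continuous open image'' means image under a continuous open surjection. $R$ is asymmetric if $xRy$ implies $\neg yRx$. For $y\in X$: $y{\downarrow}_R=\{z:zRy\}$, $y{\uparrow}_R=\{z:yRz\}$. For $Q$ dense and $x\in X$: an open neighborhood $U$ of $x$ is $R$-right along $Q$ if $xRy$ for all $y\in(U\setminus\{x\})\cap Q$; $x$ looks to the $R$-right along $Q$ if some open neighborhood of $x$ is $R$-right along $Q$ and for every open neighborhood $U$ of $x$ there is $y\in(U\setminus\{x\})\cap Q$ such that $y{\downarrow}_R$ is a neighborhood of $x$. Symmetrically, $U$ is $R$-left along $Q$ if $yRx$ for all $y\in(U\setminus\{x\})\cap Q$; $x$ looks to the $R$-left along $Q$ if some open neighborhood of $x$ is $R$-left along $Q$ and for every open neighborhood $U$ of $x$ there is $y\in(U\setminus\{x\})\cap Q$ with $y{\uparrow}_R$ a neighborhood of $x$. $\langle X,\tau\rangle$ is $R$-bidirected along $Q$ if there are dense sets $A_l,A_r$ with $X=A_l\cup A_r$, $A_l\cap A_r=\emptyset$, every $x\in A_r$ looks to the $R$-right along $Q$ and every $x\in A_l$ looks to the $R$-left along $Q$. *)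

From HB Require Import structures.
From mathcomp Require Import all_boot all_order all_algebra.
From mathcomp Require Import all_classical all_reals all_analysis.
Set Implicit Arguments. Unset Strict Implicit. Unset Printing Implicit Defensive.
Import Order.TTheory GRing.Theory Num.Theory.
Local Open Scope classical_set_scope.
Local Open Scope ring_scope.

Definition asymmetric_rel (X : Type) (R : X -> X -> Prop) :=
  forall x y, R x y -> ~ R y x.

Definition down_set (X : Type) (R : X -> X -> Prop) (y : X) : set X :=
  [set z | R z y].
Definition up_set (X : Type) (R : X -> X -> Prop) (y : X) : set X :=
  [set z | R y z].

Definition R_right_along (X : topologicalType) (R : X -> X -> Prop)
  (Q : set X) (x : X) (U : set X) :=
  forall y, U y -> y <> x -> Q y -> R x y.

Definition R_left_along (X : topologicalType) (R : X -> X -> Prop)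
  (Q : set X) (x : X) (U : set X) :=
  forall y, U y -> y <> x -> Q y -> R y x.

Definition looks_right (X : topologicalType) (R : X -> X -> Prop)
  (Q : set X) (x : X) :=
  (exists U : set X, [/\ open U, U x & R_right_along R Q x U]) /\
  (forall U : set X, open U -> U x ->
     exists y, [/\ U y, y <> x, Q y & nbhs x (down_set R y)]).

Definition looks_left (X : topologicalType) (R : X -> X -> Prop)
  (Q : set X) (x : X) :=
  (exists U : set X, [/\ open U, U x & R_left_along R Q x U]) /\
  (forall U : set X, open U -> U x ->
     exists y, [/\ U y, y <> x, Q y & nbhs x (up_set R y)]).

Definition bidirected (X : topologicalType) (R : X -> X -> Prop) (Q : set X) :=
  exists Al Ar : set X,
    [/\ dense Al, dense Ar, Al `|` Ar = setT, Al `&` Ar = set0 &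
        ((forall x, Ar x -> looks_right R Q x) /\
         (forall x, Al x -> looks_left R Q x))].

(* Open sets of the Sorgenfrey line on a real type K: the topology generated
   by the half-open intervals [a,b), i.e. unions of such intervals. *)
Definition sorgenfrey_open (K : realType) (A : set K) :=
  forall x, A x -> exists b : K, x < b /\ [set y | x <= y < b] `<=` A.

Definition sorgenfrey_cont_open_surj (K : realType) (X : topologicalType)
  (f : K -> X) :=
  [/\ (forall V : set X, open V -> sorgenfrey_open (f @^-1` V)),
      (forall U : set K, sorgenfrey_open U -> open (f @` U)) &
      (forall y : X, exists x : K, f x = y)].

From mathcomp Require Import all_boot all_order all_algebra.
From mathcomp Require Import all_classical all_reals all_analysis.
From mathcomp Require Import lra.
Import Order.TTheory GRing.Theory Num.Theory.
Import numFieldNormedType.Exports.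
Local Open Scope classical_set_scope.
Local Open Scope ring_scope.

(* Let f : K -> X be a continuous open map from the Sorgenfrey
   line.  Call t "d-anchored" (for R) when every point p in [t, t + d) with
   f p in Q and f p <> f t satisfies R (f p) (f t).  If f t looks to the
   R-left, continuity of f at t makes t d-anchored for some d = 1/(n+1);
   if f t looks to the R-right, t is d-anchored for the converse relation.
   So K is the countable union of these anchored sets, and by the Baire
   category theorem one of them is dense in a nondegenerate interval; after
   shrinking, in an interval of length at most d, and then either the
   R-anchored points or the converse-anchored points are dense in a
   subinterval.  That is impossible: openness of f yields a point s there
   with f s looking to the right, hence a Q-point f r, r > s, with R (f p) (f r)
   for all p just right of s, and an anchored point t between s and r then
   gives R (f r) (f t) and R (f t) (f r), against asymmetry.  The left/right
   symmetry is handled by passing to the converse relation.  The argument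
   does not need that X is Hausdorff, that Q is dense, that f is onto, or
   that the two direction sets are disjoint.
   The file proves: order facts about intervals and density in them, the
   Baire step, the facts about continuous open images, and then the theorem. *)

Definition converse {X : Type} (R : X -> X -> Prop) : X -> X -> Prop :=
  fun x y => R y x.

Lemma asymmetric_converse {X : Type} {R : X -> X -> Prop} :
  asymmetric_rel R -> asymmetric_rel (converse R).
Proof. by move=> asym x y; apply: asym. Qed.

Lemma looks_left_converse {X : topologicalType} {R : X -> X -> Prop}
    {Q : set X} {x : X} :
  looks_left R Q x -> looks_right (converse R) Q x.
Proof. by []. Qed.

Lemma looks_right_converse {X : topologicalType} {R : X -> X -> Prop}
    {Q : set X} {x : X} :
  looks_right R Q x -> looks_left (converse R) Q x.
Proof. by []. Qed.

Definition dense_in {K : realType} (A : set K) (a b : K) :=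
  forall u v, a <= u -> u < v -> v <= b -> exists2 t, u < t < v & A t.

Lemma dense_in_short {K : realType} {A : set K} {a b d : K} :
  a < b -> 0 < d -> dense_in A a b ->
  exists a' b', [/\ a' < b', b' - a' <= d & dense_in A a' b'].
Proof.
move=> ab d0 dA; exists a, (Num.min b (a + d)); split.
- by rewrite lt_min ab /=; lra.
- by rewrite lerBlDl ge_min lexx orbT.
- move=> u v au uv; rewrite le_min => /andP[vb _].
  exact: dA.
Qed.

Lemma dense_in_setU {K : realType} {A B : set K} {a b : K} :
  dense_in (A `|` B) a b ->
  dense_in A a b \/
  exists u v, [/\ a <= u, u < v, v <= b & dense_in B u v].
Proof.
move=> dAB; have [dA|ndA] := pselect (dense_in A a b); first by left.
right; move: ndA => /existsNP[u /existsNP[v]].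
move=> /not_implyP[au /not_implyP[uv /not_implyP[vb noA]]].
exists u, v; split => // u' v' uu' u'v' v'v.
have [t /andP[u't tv'] [At|Bt]] := dAB u' v' (le_trans au uu') u'v'
  (le_trans v'v vb); last by exists t => //; apply/andP.
by exfalso; apply: noA; exists t => //; apply/andP; split; lra.
Qed.

Lemma dense_in_of_closure {K : realType} {A : set K} {x e : K} :
  0 < e -> ball x e `<=` closure A -> dense_in A (x - e / 2) (x + e / 2).
Proof.
move=> e0 ball_cl u v xu uv vx.
have mid_cl : closure A ((u + v) / 2).
  by apply: ball_cl; rewrite -ball_normE /ball_ /= ltr_distlC; apply/andP; lra.
have mid_nbhs : nbhs ((u + v) / 2) [set y | u < y < v].
  apply/nbhs_ballP; exists ((v - u) / 2) => /=; first lra.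
  by move=> y; rewrite -ball_normE /ball_ /= ltr_distlC => /andP[? ?];
    apply/andP; lra.
by have [t [At ut]] := mid_cl _ mid_nbhs; exists t.
Qed.

Lemma baire_dense_interval {K : realType} {A : nat -> set K} :
  (forall t, exists n, A n t) ->
  exists n a b, a < b /\ dense_in (A n) a b.
Proof.
move=> cover.
have [n not_dense] : exists n, ~ dense (~` closure (A n)).
  apply: contrapT => /forallNP all_dense.
  have open_dense n : open (~` closure (A n)) /\ dense (~` closure (A n)).
    by split; [exact/closed_openC/closed_closure | exact: contrapT].
  have [x [_ notA]] := Baire open_dense (ex_intro _ 0 I) openT.
  have [m Amx] := cover x.
  exact: notA m I (subset_closure Amx).
have [V [[x x_V] disj]] := denseNE not_dense.
have V_cl : V `<=` closure (A n).
  by move=> y Vy; apply: contrapT => ncl; rewrite -[False]/(set0 y) -disj.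
have /nbhs_ballP[e /= e0 ball_V] : nbhs x V by exact: open_nbhs_nbhs.
exists n, (x - e / 2), (x + e / 2); split; first lra.
exact: dense_in_of_closure (subset_trans ball_V V_cl).
Qed.

Lemma sorgenfrey_open_halfopen {K : realType} (a b : K) :
  sorgenfrey_open [set y | a <= y < b].
Proof.
move=> x /andP[ax xb]; exists b; split => // y /andP[xy yb].
by apply/andP; split => //; exact: le_trans ax xy.
Qed.

Lemma sorgenfrey_open_open {K : realType} (a b : K) :
  sorgenfrey_open [set y | a < y < b].
Proof.
move=> x /andP[ax xb]; exists b; split => // y /andP[xy yb].
by apply/andP; split => //; exact: lt_le_trans ax xy.
Qed.

Definition anchored {K : realType} {X : Type} (R : X -> X -> Prop)
    (Q : set X) (f : K -> X) (d t : K) :=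
  forall p, t <= p < t + d -> Q (f p) -> f p <> f t -> R (f p) (f t).

Section ContinuousOpenImage.
Context {K : realType} {X : topologicalType} {f : K -> X}.
Hypothesis f_cont : forall V : set X, open V -> sorgenfrey_open (f @^-1` V).
Hypothesis f_open : forall U : set K, sorgenfrey_open U -> open (f @` U).

Lemma preimage_nbhs_right {t : K} {N : set X} :
  nbhs (f t) N -> exists2 c, t < c & forall p, t <= p < c -> N (f p).
Proof.
rewrite nbhsE => -[B [oB Bft] BN].
have [c [tc cB]] := f_cont _ oB _ Bft.
by exists c => // p tp; apply/BN/cB.
Qed.

Lemma image_interval_meets_dense {A : set X} {a b : K} :
  dense A -> a < b -> exists2 t, a < t < b & A (f t).
Proof.
move=> dA ab.
have img_ne : (f @` [set y | a < y < b]) !=set0.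
  by exists (f ((a + b) / 2)), ((a + b) / 2) => //; apply/andP; lra.
have [_ [[t abt <-] Aft]] := dA _ img_ne (f_open _ (sorgenfrey_open_open a b)).
by exists t.
Qed.

Lemma looks_left_anchored {Q : set X} {R : X -> X -> Prop} {t : K} :
  looks_left R Q (f t) -> exists n : nat, anchored R Q f n.+1%:R^-1 t.
Proof.
move=> [[W [oW Wft W_left]] _].
have [b [tb tbW]] := f_cont _ oW _ Wft.
have [n tnb] := ltr_add_invr tb.
exists n => p /andP[tp pn] Qp ne; apply: W_left => //; apply: tbW.
by rewrite /= tp /=; exact: lt_trans pn tnb.
Qed.

Lemma no_dense_anchored {Q : set X} {R : X -> X -> Prop} {Ar : set X}
    {d a b : K} :
  asymmetric_rel R -> dense Ar -> (forall x, Ar x -> looks_right R Q x) ->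
  a < b -> b - a <= d -> ~ dense_in (anchored R Q f d) a b.
Proof.
move=> asym dAr Ar_right ab short dense_anch.
have [s /andP[a_s s_b] Ar_fs] := image_interval_meets_dense dAr ab.
have [_ approach] := Ar_right _ Ar_fs.
have fs_img : (f @` [set y | s <= y < b]) (f s).
  by exists s => //; apply/andP.
have [_ [[r /andP[sr rb] <-] fr_ne Qfr below_fr]] :=
  approach _ (f_open _ (sorgenfrey_open_halfopen s b)) fs_img.
have s_lt_r : s < r.
  by rewrite lt_neqAle sr andbT; apply: contra_notN fr_ne => /eqP->.
have [c sc c_below] := preimage_nbhs_right below_fr.
have s_lt_m : s < Num.min c r by rewrite lt_min sc s_lt_r.
have m_le_b : Num.min c r <= b by rewrite ge_min (ltW rb) orbT.
have [t /andP[st]] := dense_anch s _ (ltW a_s) s_lt_m m_le_b.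
rewrite lt_min => /andP[tc tr] anch_t.
have Rtr : R (f t) (f r) by apply: c_below; rewrite (ltW st) tc.
have [eq_rt|ne_rt] := pselect (f r = f t).
  by rewrite eq_rt in Rtr; exact: (asym _ _ Rtr Rtr).
apply: (asym _ _ Rtr (anch_t r _ Qfr ne_rt)).
by apply/andP; split; [exact: ltW | lra].
Qed.

End ContinuousOpenImage.

Theorem mainTheorem11 (K : realType) (X : topologicalType) (Q : set X)
  (R : X -> X -> Prop) :
  hausdorff_space X -> dense Q -> asymmetric_rel R -> bidirected R Q ->
  ~ (exists f : K -> X, sorgenfrey_cont_open_surj f).
Proof.
move=> _ _ asym [Al [Ar [dAl dAr cover _ [Ar_right Al_left]]]].
move=> [f [f_cont f_open _]].
pose A n := anchored R Q f n.+1%:R^-1 `|` anchored (converse R) Q f n.+1%:R^-1.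
have A_cover t : exists n, A n t.
  have : (Al `|` Ar) (f t) by rewrite cover.
  case=> [/Al_left | /Ar_right/looks_right_converse] /(looks_left_anchored f_cont)
    [n anch]; exists n; by [left | right].
have [n [a [b [ab dense_A]]]] := baire_dense_interval A_cover.
have d_pos : 0 < n.+1%:R^-1 :> K by rewrite invr_gt0 ltr0n.
have [a' [b' [ab' short dense_A']]] := dense_in_short ab d_pos dense_A.
have [dense_R | [u [v [au uv vb dense_conv]]]] := dense_in_setU dense_A'.
  exact: (no_dense_anchored f_cont f_open asym dAr Ar_right ab' short dense_R).
have Al_right_conv x : Al x -> looks_right (converse R) Q x.
  by move/Al_left/looks_left_converse.
have short_uv : v - u <= n.+1%:R^-1 := le_trans (lerB vb au) short.
exact: (no_dense_anchored f_cont f_open (asymmetric_converse asym) dAl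
  Al_right_conv uv short_uv dense_conv).
Qed.
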